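(* Let $u:(0,\infty)\to\mathbb{R}$ be strictly concave and continuously differentiable, and let $b>0$. Let $\hat u$ be the modified utility of $u$ with budget $b$ (defined in the context). Then (i) $\hat u$ is continuously differentiable on $(0,\infty)$; (ii) $\hat u$ is strictly concave on $(0,\infty)$; (iii) for all $\lambda>0$, $$\arg\max_{x>0}\ \hat u(x)-\lambda x=\max\Big\{0,\ \min\Big\{(u')^{-1}(\lambda),\ \tfrac{b}{\lambda}\Big\}\Big\}.$$
   Context: Modified utility: let $0=\tilde x_0<\tilde x_1<\dots<\tilde x_k<\tilde x_{k+1}=\infty$, where $\tilde x_1,\dots,\tilde x_k$ are the (crossover) solutions $\tilde x>0$ of $u'(\tilde x)=b/\tilde x$. On each interval $(\tilde x_{j-1},\tilde x_j)$ either $u'(x)\le b/x$ throughout or $u'(x)>b/x$ throughout; define $\hat u(x)=u(x)+c_j$ on intervals of the first type and $\hat u(x)=b\log x+d_j$ on intervals of the second type, where the constants $c_j,d_j$ are chosen sequentially so that $\hat u$ is continuous at each crossover point, with $c_1=d_1=0$. *)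

From Stdlib Require Import Reals Lra ClassicalEpsilon.
From Coquelicot Require Import Coquelicot.
Open Scope R_scope.

Definition strictly_concave_pos (f : R -> R) : Prop :=
  forall x y t, 0 < x -> 0 < y -> x <> y -> 0 < t < 1 ->
    t * f x + (1 - t) * f y < f (t * x + (1 - t) * y).

Definition C1_pos (f : R -> R) : Prop :=
  forall x, 0 < x -> ex_derive f x /\ continuous (Derive f) x.

(* xt 1 < ... < xt k are exactly the crossover points x > 0 with u'(x) = b/x;
   xt 0 = 0 (and x~_{k+1} = +oo is implicit). *)
Definition crossovers (u : R -> R) (b : R) (k : nat) (xt : nat -> R) : Prop :=
  xt 0%nat = 0 /\
  (forall j, (1 <= j <= k)%nat -> xt (j - 1)%nat < xt j) /\
  (forall x, 0 < x -> (Derive u x = b / x <-> exists j, (1 <= j <= k)%nat /\ x = xt j)).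

(* x lies in the open interval (x~_{j-1}, x~_j), with x~_{k+1} = +oo *)
Definition in_piece (k : nat) (xt : nat -> R) (j : nat) (x : R) : Prop :=
  xt (j - 1)%nat < x /\ ((j <= k)%nat -> x < xt j).

Definition modified_utility (u : R -> R) (b : R) (k : nat) (xt : nat -> R)
    (uh : R -> R) : Prop :=
  exists c d : nat -> R,
    c 1%nat = 0 /\ d 1%nat = 0 /\
    (forall j, (1 <= j <= k + 1)%nat ->
       ((forall x, in_piece k xt j x -> Derive u x <= b / x) ->
          forall x, in_piece k xt j x -> uh x = u x + c j) /\
       ((forall x, in_piece k xt j x -> Derive u x > b / x) ->
          forall x, in_piece k xt j x -> uh x = b * ln x + d j)) /\
    (forall j, (1 <= j <= k)%nat -> continuous uh (xt j)).

(* (u')^{-1}(l) as an extended real, with the conventions: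
   the unique y > 0 with u'(y) = l if it exists; 0 if u' < l on (0,oo);
   +oo otherwise (i.e. u' > l on (0,oo)). *)
Definition uprime_inv (u : R -> R) (l : R) : Rbar :=
  match excluded_middle_informative (exists x, 0 < x /\ Derive u x = l) with
  | left _ => Finite (epsilon (inhabits 0) (fun x => 0 < x /\ Derive u x = l))
  | right _ =>
      match excluded_middle_informative (forall x, 0 < x -> Derive u x < l) with
      | left _ => Finite 0
      | right _ => p_infty
      end
  end.

Definition opt_point (u : R -> R) (b l : R) : R :=
  Rmax 0 (real (Rbar_min (uprime_inv u l) (Finite (b / l)))).

(* On every piece, [uh] is [u] or [b * ln] up to an additive constant, so its
   derivative is [min (u' x) (b / x)]: on a piece of the first kind u' <= b/x,
   on a piece of the second kind u' > b/x, and at a crossover the two one-sided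
   derivatives both equal u' = b/x and are glued by the continuity of [uh].
   This minimum is continuous and strictly decreasing, which gives (i) and (ii).
   The strict tangent inequality of the strictly concave [uh] then shows that
   [uh x - l x] is maximised where [min (u' x) (b / x) = l], which is the point
   [max 0 (min ((u')^-1 l) (b / l))], and is decreasing when no such point
   exists. *)

From Stdlib Require Import Reals Lra Lia Arith ClassicalEpsilon Classical.
From Coquelicot Require Import Coquelicot.
Open Scope R_scope.

Lemma is_derive_ge_of_chord_below (phi : R -> R) L s :
  is_derive phi 0 L -> (forall t, 0 < t < 1 -> phi 0 + t * s <= phi t) -> s <= L.
Proof.
  intros Hd Hchord. apply is_derive_Reals in Hd.
  destruct (Rle_or_lt s L) as [|HLs]; [assumption|exfalso].
  destruct (Hd (s - L) ltac:(lra)) as [[d Hd0] Hq]; simpl in Hq.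
  pose proof (Rmin_l d 1). pose proof (Rmin_r d 1). pose proof (Rmin_pos d 1 Hd0 Rlt_0_1).
  set (t := Rmin d 1 / 2) in *.
  specialize (Hq t ltac:(unfold t; lra) ltac:(rewrite Rabs_right; unfold t; lra)).
  rewrite Rplus_0_l in Hq. apply Rabs_def2 in Hq.
  specialize (Hchord t ltac:(unfold t; lra)).
  assert (s <= (phi t - phi 0) / t).
  { apply Rmult_le_reg_r with t; [unfold t; lra|].
    unfold Rdiv; rewrite Rmult_assoc, Rinv_l by (unfold t; lra). lra. }
  lra.
Qed.

Lemma strictly_concave_tangent_le f a c l :
  strictly_concave_pos f -> 0 < a -> 0 < c -> is_derive f a l ->
  f c <= f a + l * (c - a).
Proof.
  intros Hf Ha Hc Hd.
  destruct (Req_dec a c) as [->|Hac]; [lra|].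
  assert (Hphi : is_derive (fun t => f (a + t * (c - a))) 0 ((c - a) * l)).
  { apply (is_derive_comp f (fun t => a + t * (c - a))).
    - replace (a + 0 * (c - a)) with a by ring. exact Hd.
    - auto_derive; [exact I | ring]. }
  enough (f c - f a <= (c - a) * l) by lra.
  apply (is_derive_ge_of_chord_below _ _ _ Hphi).
  intros t Ht.
  replace (a + t * (c - a)) with (t * c + (1 - t) * a) by ring.
  replace (a + 0 * (c - a)) with a by ring.
  pose proof (Hf c a t Hc Ha (not_eq_sym Hac) Ht). lra.
Qed.

Lemma strictly_concave_tangent_lt f a c l :
  strictly_concave_pos f -> 0 < a -> 0 < c -> a <> c -> is_derive f a l ->
  f c < f a + l * (c - a).
Proof.
  intros Hf Ha Hc Hac Hd.
  pose proof (strictly_concave_tangent_le f a ((a + c) / 2) l Hf Ha ltac:(lra) Hd).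
  pose proof (Hf a c (1 / 2) Ha Hc Hac ltac:(lra)).
  replace (1 / 2 * a + (1 - 1 / 2) * c) with ((a + c) / 2) in * by field.
  lra.
Qed.

Lemma strictly_concave_derive_decr f x y lx ly :
  strictly_concave_pos f -> 0 < x -> x < y ->
  is_derive f x lx -> is_derive f y ly -> ly < lx.
Proof.
  intros Hf Hx Hxy Dx Dy.
  pose proof (strictly_concave_tangent_lt f x y lx Hf Hx ltac:(lra) ltac:(lra) Dx).
  pose proof (strictly_concave_tangent_lt f y x ly Hf ltac:(lra) Hx ltac:(lra) Dy).
  nra.
Qed.

Lemma strictly_concave_Derive_decr f x y :
  strictly_concave_pos f -> C1_pos f -> 0 < x -> x < y -> Derive f y < Derive f x.
Proof.
  intros Hf Hc Hx Hxy.
  apply (strictly_concave_derive_decr f x y); auto; apply Derive_correct.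
  - apply (Hc x Hx).
  - apply (Hc y ltac:(lra)).
Qed.

Lemma strictly_concave_of_derive_decr f f' :
  (forall x, 0 < x -> is_derive f x (f' x)) ->
  (forall x y, 0 < x -> x < y -> f' y < f' x) -> strictly_concave_pos f.
Proof.
  intros Hd Hdecr.
  assert (Hlt : forall x y t, 0 < x -> x < y -> 0 < t < 1 ->
            t * f x + (1 - t) * f y < f (t * x + (1 - t) * y)).
  { intros x y t Hx Hxy Ht. set (z := t * x + (1 - t) * y).
    assert (Hxz : x < z) by (unfold z; nra).
    assert (Hzy : z < y) by (unfold z; nra).
    destruct (MVT_cor2 f f' x z Hxz) as [c1 [E1 C1]].
    { intros c Hc. apply is_derive_Reals, Hd. lra. }
    destruct (MVT_cor2 f f' z y Hzy) as [c2 [E2 C2]].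
    { intros c Hc. apply is_derive_Reals, Hd. lra. }
    assert (Hc12 : f' c2 < f' c1) by (apply Hdecr; lra).
    replace (z - x) with ((1 - t) * (y - x)) in E1 by (unfold z; ring).
    replace (y - z) with (t * (y - x)) in E2 by (unfold z; ring).
    assert (0 < t * (1 - t) * (y - x) * (f' c1 - f' c2)).
    { repeat apply Rmult_lt_0_compat; lra. }
    nra. }
  intros x y t Hx Hy Hxy Ht.
  destruct (Rlt_or_le x y) as [Hl|Hg]; [now apply Hlt|].
  pose proof (Hlt y x (1 - t) Hy ltac:(lra) ltac:(lra)).
  replace (t * x + (1 - t) * y) with ((1 - t) * y + (1 - (1 - t)) * x) by ring.
  lra.
Qed.

Lemma continuous_eq_of_filter_eq (F : (R -> Prop) -> Prop) {FF : ProperFilter F}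
    (g f : R -> R) p :
  filter_le F (locally p) -> F (fun x => g x = f x) ->
  continuous g p -> continuous f p -> g p = f p.
Proof.
  intros HF Heq Hg Hf.
  apply (@filterlim_locally_unique R R_AbsRing R_NormedModule F _ f).
  - exact (filterlim_ext_loc g f Heq (filterlim_filter_le_1 g HF Hg)).
  - exact (filterlim_filter_le_1 f HF Hf).
Qed.

Lemma is_derive_glue (g fL fR : R -> R) (a p c l : R) :
  a < p < c -> (forall x, a < x < p -> g x = fL x) -> (forall x, p < x < c -> g x = fR x) ->
  continuous g p -> is_derive fL p l -> is_derive fR p l -> is_derive g p l.
Proof.
  intros Hp HL HR Hg DL DR.
  assert (EL : g p = fL p).
  { apply (continuous_eq_of_filter_eq (at_left p)); auto.
    - apply filter_le_within.
    - apply locally_interval with (a := Finite a) (b := Finite (p + 1)); simpl; try lra.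
      intros y Ha _ Hyp. apply HL; lra.
    - apply (@ex_derive_continuous R_AbsRing R_NormedModule fL). exists l; exact DL. }
  assert (ER : g p = fR p).
  { apply (continuous_eq_of_filter_eq (at_right p)); auto.
    - apply filter_le_within.
    - apply locally_interval with (a := Finite (p - 1)) (b := Finite c); simpl; try lra.
      intros y _ Hc Hyp. apply HR; lra.
    - apply (@ex_derive_continuous R_AbsRing R_NormedModule fR). exists l; exact DR. }
  apply is_derive_Reals. apply is_derive_Reals in DL. apply is_derive_Reals in DR.
  intros eps Heps.
  destruct (DL eps Heps) as [[dL HdL0] HdL]. destruct (DR eps Heps) as [[dR HdR0] HdR].
  simpl in HdL, HdR.
  set (d := Rmin (Rmin dL dR) (Rmin (p - a) (c - p))).
  assert (Hd : 0 < d) by (unfold d; repeat apply Rmin_pos; lra).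
  pose proof (Rmin_l (Rmin dL dR) (Rmin (p - a) (c - p))).
  pose proof (Rmin_r (Rmin dL dR) (Rmin (p - a) (c - p))).
  pose proof (Rmin_l dL dR). pose proof (Rmin_r dL dR).
  pose proof (Rmin_l (p - a) (c - p)). pose proof (Rmin_r (p - a) (c - p)).
  exists (mkposreal d Hd). simpl. intros h Hh0 Hh. apply Rabs_def2 in Hh as Hh'.
  destruct (Rlt_or_le h 0) as [Hn|Hn].
  - rewrite HL, EL by (unfold d in *; lra). apply HdL; auto. unfold d in *; lra.
  - rewrite HR, ER by (unfold d in *; lra). apply HdR; auto. unfold d in *; lra.
Qed.

Lemma IVT_sign_change f a c :
  (forall x, Rmin a c <= x <= Rmax a c -> continuity_pt f x) ->
  f a < 0 -> 0 < f c -> exists z, Rmin a c <= z <= Rmax a c /\ f z = 0.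
Proof.
  intros Hf Ha Hc.
  destruct (Rtotal_order a c) as [Hac|[->|Hca]]; [|lra|].
  - rewrite Rmin_left, Rmax_right in * by lra.
    destruct (Ranalysis5.IVT_interv f a c) as [z Hz]; eauto.
  - rewrite Rmin_right, Rmax_left in * by lra.
    destruct (Ranalysis5.IVT_interv (fun x => - f x) c a) as [z [Hz Fz]]; try lra.
    + intros y Hy. apply continuity_pt_opp, Hf, Hy.
    + exists z. split; [exact Hz | lra].
Qed.

Lemma continuous_Rmin (f g : R -> R) x :
  continuous f x -> continuous g x -> continuous (fun y => Rmin (f y) (g y)) x.
Proof.
  intros Hf Hg.
  apply (continuous_ext (fun y => (f y + g y - Rabs (f y - g y)) * / 2)).
  { intros y. unfold Rmin; destruct (Rle_dec (f y) (g y)).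
    - rewrite Rabs_left1; lra.
    - rewrite Rabs_right; lra. }
  apply (@continuous_mult R_UniformSpace R_AbsRing); [|apply continuous_const].
  apply (@continuous_minus R_UniformSpace R_AbsRing R_NormedModule).
  - apply (@continuous_plus R_UniformSpace R_AbsRing R_NormedModule); assumption.
  - apply continuous_Rabs_comp, (@continuous_minus R_UniformSpace R_AbsRing R_NormedModule);
      assumption.
Qed.

Definition modified_marginal (u : R -> R) (b x : R) : R := Rmin (Derive u x) (b / x).

Lemma continuous_b_div (b x : R) : 0 < x -> continuous (fun y => b / y) x.
Proof. intros Hx. apply (@ex_derive_continuous R_AbsRing R_NormedModule). auto_derive. lra. Qed.

Lemma continuity_pt_Derive u x : C1_pos u -> 0 < x -> continuity_pt (Derive u) x.
Proof. intros Hu Hx. apply continuity_pt_filterlim, (Hu x Hx). Qed.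

Lemma modified_marginal_continuous u b x :
  C1_pos u -> 0 < x -> continuous (modified_marginal u b) x.
Proof.
  intros Hu Hx. apply continuous_Rmin; [apply (Hu x Hx) | apply continuous_b_div, Hx].
Qed.

Lemma modified_marginal_decr u b x y :
  strictly_concave_pos u -> C1_pos u -> 0 < b -> 0 < x -> x < y ->
  modified_marginal u b y < modified_marginal u b x.
Proof.
  intros Hs Hu Hb Hx Hxy. unfold modified_marginal.
  pose proof (strictly_concave_Derive_decr u x y Hs Hu Hx Hxy).
  assert (Db : b / y < b / x).
  { apply Rmult_lt_compat_l; [exact Hb|]. apply Rinv_lt_contravar; [nra | exact Hxy]. }
  unfold Rmin; destruct (Rle_dec (Derive u y) (b / y)), (Rle_dec (Derive u x) (b / x)); lra.
Qed.

Section Pieces.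

Variables (u : R -> R) (b : R) (k : nat) (xt : nat -> R) (uh : R -> R).
Hypothesis Hu : C1_pos u.
Hypothesis Hcross : crossovers u b k xt.

Lemma crossovers_lt i j : (i < j)%nat -> (j <= k)%nat -> xt i < xt j.
Proof.
  destruct Hcross as [_ [Hinc _]].
  induction j as [|j IH]; intros Hij Hjk; [lia|].
  assert (Hs : xt j < xt (S j)).
  { pose proof (Hinc (S j) ltac:(lia)) as H. now replace (S j - 1)%nat with j in H by lia. }
  destruct (Nat.eq_dec i j) as [->|Hne]; [exact Hs|].
  apply Rlt_trans with (xt j); [apply IH; lia | exact Hs].
Qed.

Lemma crossovers_le i j : (i <= j)%nat -> (j <= k)%nat -> xt i <= xt j.
Proof.
  intros Hij Hjk. destruct (Nat.eq_dec i j) as [->|]; [lra|].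
  left. apply crossovers_lt; lia.
Qed.

Lemma in_piece_pos j x : (1 <= j <= k + 1)%nat -> in_piece k xt j x -> 0 < x.
Proof.
  intros Hj [Hx _]. pose proof (crossovers_le 0 (j - 1) ltac:(lia) ltac:(lia)).
  destruct Hcross as [H0 _]. lra.
Qed.

Lemma in_piece_between j x y z :
  in_piece k xt j x -> in_piece k xt j y -> Rmin x y <= z <= Rmax x y ->
  in_piece k xt j z.
Proof.
  intros [Hx1 Hx2] [Hy1 Hy2] Hz. split.
  - pose proof (Rmin_glb_lt x y _ Hx1 Hy1). lra.
  - intros Hjk. pose proof (Rmax_lub_lt x y _ (Hx2 Hjk) (Hy2 Hjk)). lra.
Qed.

Lemma in_piece_not_crossover j x :
  (1 <= j <= k + 1)%nat -> in_piece k xt j x -> Derive u x <> b / x.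
Proof.
  intros Hj Hp E. pose proof (in_piece_pos j x Hj Hp) as Hx.
  destruct Hp as [H1 H2]. destruct Hcross as [_ [_ Hcr]].
  apply (Hcr x Hx) in E. destruct E as [i [Hi ->]].
  destruct (le_lt_dec i (j - 1)) as [Hle|Hlt].
  - pose proof (crossovers_le i (j - 1) Hle ltac:(lia)). lra.
  - pose proof (crossovers_le j i ltac:(lia) ltac:(lia)). specialize (H2 ltac:(lia)). lra.
Qed.

Lemma in_piece_Derive_sign j : (1 <= j <= k + 1)%nat ->
  (forall x, in_piece k xt j x -> Derive u x <= b / x) \/
  (forall x, in_piece k xt j x -> Derive u x > b / x).
Proof.
  intros Hj.
  destruct (classic (forall x, in_piece k xt j x -> Derive u x <= b / x)) as [|Hn];
    [left; assumption | right].
  apply not_all_ex_not in Hn as [y1 Hy1]. apply imply_to_and in Hy1 as [Hp1 Hn1].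
  intros y2 Hp2. apply Rnot_le_lt in Hn1.
  destruct (Rlt_or_le (b / y2) (Derive u y2)) as [|Hle]; [assumption | exfalso].
  assert (Hlt : Derive u y2 < b / y2).
  { destruct Hle as [|E]; [assumption|]. now apply (in_piece_not_crossover j y2) in E. }
  destruct (IVT_sign_change (fun y => Derive u y - b / y) y2 y1) as [z [Hz Fz]]; try lra.
  - intros y Hy. pose proof (in_piece_pos j y Hj (in_piece_between j y2 y1 y Hp2 Hp1 Hy)).
    apply continuity_pt_minus.
    + apply continuity_pt_Derive; assumption.
    + apply continuity_pt_filterlim, continuous_b_div; assumption.
  - apply (in_piece_not_crossover j z Hj (in_piece_between j y2 y1 z Hp2 Hp1 Hz)). lra.
Qed.

Lemma in_piece_or_crossover x : 0 < x ->
  (exists j, (1 <= j <= k + 1)%nat /\ in_piece k xt j x) \/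
  (exists j, (1 <= j <= k)%nat /\ x = xt j).
Proof.
  intros Hx.
  assert (Hlast : forall m, (m <= k)%nat ->
            exists j, (j <= m)%nat /\ xt j < x /\ ((j < m)%nat -> x <= xt (S j))).
  { induction m as [|m IH]; intros Hm.
    - exists 0%nat. destruct Hcross as [-> _]. repeat split; auto; lia.
    - destruct (IH ltac:(lia)) as [j [Hj1 [Hj2 Hj3]]].
      destruct (Nat.eq_dec j m) as [->|Hne].
      + destruct (Rlt_or_le (xt (S m)) x).
        * exists (S m). repeat split; auto; lia.
        * exists m. repeat split; auto.
      + exists j. repeat split; auto. intros; apply Hj3; lia. }
  destruct (Hlast k (le_n k)) as [j [Hjk [Hj Hnext]]].
  destruct (Nat.eq_dec j k) as [->|Hne].
  - left. exists (k + 1)%nat. split; [lia|]. split; [|lia].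
    now replace (k + 1 - 1)%nat with k by lia.
  - destruct (Hnext ltac:(lia)) as [Hlt|Heq].
    + left. exists (S j). split; [lia|]. split; [|auto].
      now replace (S j - 1)%nat with j by lia.
    + right. exists (S j). split; [lia | exact Heq].
Qed.

Hypothesis Hmod : modified_utility u b k xt uh.

(* At a crossover both formulas have derivative u' = b / x, so the primitive
   also has the right derivative at the endpoints of the piece. *)
Lemma piece_primitive j : (1 <= j <= k + 1)%nat ->
  exists f, (forall x, in_piece k xt j x -> uh x = f x) /\
    (forall x, 0 < x -> (in_piece k xt j x \/ Derive u x = b / x) ->
       is_derive f x (modified_marginal u b x)).
Proof.
  intros Hj. destruct Hmod as [c [d [_ [_ [Hpieces _]]]]].
  destruct (Hpieces j Hj) as [Hc Hd].
  unfold modified_marginal.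
  destruct (in_piece_Derive_sign j Hj) as [Hsign|Hsign].
  - exists (fun x => u x + c j). split; [now apply Hc|].
    intros x Hx Hor. rewrite Rmin_left by (destruct Hor as [Hp|E]; [apply Hsign, Hp | lra]).
    auto_derive; [apply (Hu x Hx) | apply Rmult_1_l].
  - exists (fun x => b * ln x + d j). split; [now apply Hd|].
    intros x Hx Hor.
    rewrite Rmin_right by (destruct Hor as [Hp|E]; [left; apply Hsign, Hp | lra]).
    auto_derive; [lra | field; lra].
Qed.

Lemma modified_utility_is_derive x : 0 < x -> is_derive uh x (modified_marginal u b x).
Proof.
  intros Hx.
  destruct (in_piece_or_crossover x Hx) as [[j [Hj Hp]]|[j [Hj ->]]].
  - destruct (piece_primitive j Hj) as [f [Hf Df]].
    apply (is_derive_ext_loc f uh); [|apply Df; auto].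
    destruct Hp as [H1 H2].
    apply locally_interval with (a := Finite (xt (j - 1)))
      (b := if le_lt_dec j k then Finite (xt j) else p_infty); simpl; auto.
    + destruct (le_lt_dec j k); simpl; auto.
    + intros y Hy1 Hy2. symmetry. apply Hf. split; [exact Hy1|].
      intros Hjk. destruct (le_lt_dec j k); simpl in Hy2; [exact Hy2 | lia].
  - assert (Hcr : Derive u (xt j) = b / xt j).
    { destruct Hcross as [_ [_ Hcr]]. apply Hcr; [exact Hx | now exists j]. }
    destruct (piece_primitive j ltac:(lia)) as [fL [HfL DfL]].
    destruct (piece_primitive (S j) ltac:(lia)) as [fR [HfR DfR]].
    set (c := if le_lt_dec (S j) k then xt (S j) else xt j + 1).
    assert (Hc : xt j < c).
    { unfold c; destruct (le_lt_dec (S j) k); [apply crossovers_lt; lia | lra]. }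
    assert (Ha : xt (j - 1) < xt j) by (apply crossovers_lt; lia).
    apply (is_derive_glue uh fL fR (xt (j - 1)) (xt j) c); auto.
    + intros y Hy. apply HfL. split; [lra | intros; lra].
    + intros y Hy. apply HfR. split; [now replace (S j - 1)%nat with j by lia|].
      intros Hk. unfold c in Hy. destruct (le_lt_dec (S j) k); [lra | lia].
    + destruct Hmod as [c' [d' [_ [_ [_ Hcont]]]]]. now apply Hcont.
Qed.

End Pieces.

Lemma modified_marginal_at_budget_point u b l :
  0 < b -> 0 < l -> l <= Derive u (b / l) -> modified_marginal u b (b / l) = l.
Proof.
  intros Hb Hl Hle. unfold modified_marginal.
  replace (b / (b / l)) with l by (field; lra). now apply Rmin_right.
Qed.

Lemma Derive_ge_of_not_attained u l y :
  C1_pos u -> ~ (exists x, 0 < x /\ Derive u x = l) ->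
  ~ (forall x, 0 < x -> Derive u x < l) -> 0 < y -> l <= Derive u y.
Proof.
  intros Hu NEx NAll Hy.
  apply not_all_ex_not in NAll as [x0 Hx0]. apply imply_to_and in Hx0 as [Hx0 Hn].
  apply Rnot_lt_le in Hn.
  destruct (Rlt_or_le (Derive u y) l) as [Hlt|]; [exfalso|assumption].
  destruct Hn as [Hn|Hn]; [|apply NEx; exists x0; auto].
  pose proof (Rmin_glb_lt _ _ _ Hy Hx0).
  destruct (IVT_sign_change (fun z => Derive u z - l) y x0) as [z [Hz Fz]]; try lra.
  - intros z Hz. apply continuity_pt_minus; [apply continuity_pt_Derive; auto; lra|].
    apply continuity_pt_const. intros ? ?; reflexivity.
  - apply NEx. exists z. split; lra.
Qed.

Lemma opt_point_spec u b l :
  strictly_concave_pos u -> C1_pos u -> 0 < b -> 0 < l ->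
  (0 < opt_point u b l /\ modified_marginal u b (opt_point u b l) = l) \/
  (opt_point u b l = 0 /\ forall x, 0 < x -> modified_marginal u b x < l).
Proof.
  intros Hs Hu Hb Hl.
  assert (Hbl : 0 < b / l) by (apply Rdiv_lt_0_compat; assumption).
  unfold opt_point, uprime_inv.
  destruct (excluded_middle_informative (exists x, 0 < x /\ Derive u x = l)) as [Ex|NEx].
  - destruct (epsilon_spec (inhabits 0) (fun x => 0 < x /\ Derive u x = l) Ex) as [He0 He].
    set (e := epsilon (inhabits 0) (fun x => 0 < x /\ Derive u x = l)) in *.
    simpl. left. rewrite Rmax_right by (apply Rlt_le, Rmin_pos; assumption).
    split; [apply Rmin_pos; assumption|].
    unfold Rmin. destruct (Rle_dec e (b / l)) as [Hle|Hgt].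
    + unfold modified_marginal. rewrite He. apply Rmin_left.
      apply (Rmult_le_reg_r (e / l)); [apply Rdiv_lt_0_compat; assumption|].
      replace (l * (e / l)) with e by (field; lra).
      replace (b / e * (e / l)) with (b / l) by (field; lra). exact Hle.
    + apply modified_marginal_at_budget_point; auto.
      pose proof (strictly_concave_Derive_decr u (b / l) e Hs Hu Hbl ltac:(lra)). lra.
  - destruct (excluded_middle_informative (forall x, 0 < x -> Derive u x < l)) as [All|NAll].
    + simpl. right. split.
      * rewrite Rmin_left by lra. apply Rmax_left; lra.
      * intros x Hx. unfold modified_marginal.
        pose proof (Rmin_l (Derive u x) (b / x)). pose proof (All x Hx). lra.
    + simpl. left. rewrite Rmax_right by lra. split; [exact Hbl|].
      apply modified_marginal_at_budget_point; auto.
      now apply (Derive_ge_of_not_attained u l).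
Qed.

Theorem lemma2 (u : R -> R) (b : R) (k : nat) (xt : nat -> R) (uh : R -> R) :
  strictly_concave_pos u -> C1_pos u -> 0 < b ->
  crossovers u b k xt -> modified_utility u b k xt uh ->
  C1_pos uh /\
  strictly_concave_pos uh /\
  (forall l, 0 < l ->
     let xs := opt_point u b l in
     (0 < xs -> forall x, 0 < x -> x <> xs -> uh x - l * x < uh xs - l * xs) /\
     (xs = 0 -> forall x y, 0 < x -> x < y -> uh y - l * y < uh x - l * x)).
Proof.
  intros Hs Hu Hb Hc Hm.
  pose proof (modified_utility_is_derive u b k xt uh Hu Hc Hm) as D.
  assert (Hconc : strictly_concave_pos uh).
  { apply (strictly_concave_of_derive_decr uh (modified_marginal u b)); [exact D|].
    intros; apply modified_marginal_decr; auto. }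
  split; [|split; [exact Hconc|]].
  - intros x Hx. split; [eexists; apply D, Hx|].
    apply (continuous_ext_loc _ (modified_marginal u b));
      [|apply modified_marginal_continuous; assumption].
    apply locally_interval with (a := Finite 0) (b := p_infty); simpl; auto.
    intros y Hy _. symmetry. apply is_derive_unique, D, Hy.
  - intros l Hl xs.
    destruct (opt_point_spec u b l Hs Hu Hb Hl) as [[Hxs Hmxs]|[Hxs Hlt]].
    + fold xs in Hxs, Hmxs. split; [|lra]. intros _ x Hx Hne.
      pose proof (D xs Hxs) as Dxs. rewrite Hmxs in Dxs.
      pose proof (strictly_concave_tangent_lt uh xs x l Hconc Hxs Hx (not_eq_sym Hne) Dxs).
      lra.
    + fold xs in Hxs. split; [lra|]. intros _ x y Hx Hxy.
      pose proof (strictly_concave_tangent_lt uh x y _ Hconc Hx ltac:(lra) ltac:(lra) (D x Hx)).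
      pose proof (Hlt x Hx). nra.
Qed.
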